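(* Let $M$ be a mode for a program $P$ such that $P$ is safe w.r.t. $M$ and $P$ satisfies $M$. Let $\mathit{Diseqs}$ be a conjunction of disequations and $G$ a goal with $vars(\mathit{Diseqs})\cap vars(G)=\emptyset$. Then: (i) $(G,\mathit{Diseqs})\longmapsto^*_P\mathit{true}$ iff $(\mathit{Diseqs},G)\longmapsto^*_P\mathit{true}$; (ii) $\mu(P,(G,\mathit{Diseqs}))=\mu(P,(\mathit{Diseqs},G))$; (iii) $\nu(P,(G,\mathit{Diseqs}))=\nu(P,(\mathit{Diseqs},G))$.
   Context: Predicate symbols $\mathit{true}$, $=$, $\neq$ are basic, all others non-basic. Basic atoms: $\mathit{true}$, $t_1=t_2$, $t_1\neq t_2$ (disequation); non-basic atoms $p(t_1,\dots,t_m)$, $p$ non-basic. A goal is a conjunction of atoms ('','' associative, neutral element $\mathit{true}$). A clause $C$ is $A\leftarrow G$ with non-basic head $hd(C)$ and body $bd(C)$; a program is a set of clauses. All mgu's are relevant and idempotent. A variable $X$ is a local variable of goal $G$ in clause $H\leftarrow G_1,G,G_2$ iff $X\in vars(G)-vars(H,G_1,G_2)$. Operational semantics: (1) $(t_1=t_2,G)\longmapsto_P G\vartheta$ if $t_1,t_2$ unify with mgu $\vartheta$; (2) $(t_1\neq t_2,G)\longmapsto_P G$ if not unifiable; (3) $(A,G)\longmapsto_P(bd(C),G)\vartheta$ if $A$ is non-basic, $C$ a renamed apart clause of $P$ and $\vartheta$ an mgu of $A$ and $hd(C)$. A derivation is $G_0\longmapsto_P\cdots\longmapsto_P G_z$,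 of length $z$; successful if $G_z=\mathit{true}$. $\longmapsto^*_P$ is the reflexive-transitive closure. For a derivation $\delta$, $\lambda(\delta)$ is the number of goals $G_i$ in $\delta$ of the form $(A,K)$ with $A$ non-basic. $\mu(P,G)$ is the minimum of $\lambda(\delta)$ over successful derivations $\delta$ of $G$ in $P$, and $\infty$ if $G$ does not succeed; $\nu(P,G)$ is the minimum length of a successful derivation of $G$ in $P$, and $\infty$ if none. Modes: a mode for non-basic $p$ of arity $h$ is $p(m_1,\dots,m_h)$, $m_i\in\{+,?\}$; $t_i$ is an input argument iff $m_i=+$; variables in input arguments are input variables; a mode for a program contains exactly one mode per non-basic predicate occurring in it. An atom satisfies $M$ iff $M$ has a mode for its predicate and its input arguments are ground. $P$ satisfies $M$ iff for every non-basic $A_0$ satisfying $M$ and every non-basic $A$ and goal $G$ with $A_0\longmapsto^*_P(A,G)$, $A$ satisfies $M$. A clause $C$ is safe w.r.t. $M$ iff each variable of each disequation $t_1\neq t_2$ in $bd(C)$ is an input variable of $hd(C)$ or a local variable of $t_1\neq t_2$ in $C$; a program is safe iff all its clauses are. *)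

From Stdlib Require Import List Arith Relations ClassicalEpsilon.
Import ListNotations.

Inductive term : Type :=
| Var (x : nat)
| Fn (f : nat) (args : list term).

Inductive occ (x : nat) : term -> Prop :=
| occ_var : occ x (Var x)
| occ_fn f args t : In t args -> occ x t -> occ x (Fn f args).

Definition occ_terms (x : nat) (l : list term) : Prop :=
  exists t, In t l /\ occ x t.

Definition ground (t : term) : Prop := forall x, ~ occ x t.

Definition subst := nat -> term.

Fixpoint app_subst (s : subst) (t : term) : term :=
  match t with
  | Var x => s x
  | Fn f args => Fn f (map (app_subst s) args)
  end.

Definition unifier (s : subst) (l1 l2 : list term) : Prop :=
  map (app_subst s) l1 = map (app_subst s) l2.

Definition unifiable (l1 l2 : list term) : Prop :=
  exists s, unifier s l1 l2.

(* relevant, idempotent most general unifier of the lists l1, l2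
   (componentwise unification) *)
Definition is_mgu (th : subst) (l1 l2 : list term) : Prop :=
  unifier th l1 l2 /\
  (forall s, unifier s l1 l2 -> exists eta, forall x, s x = app_subst eta (th x)) /\
  (forall x, app_subst th (th x) = th x) /\
  (forall x, th x <> Var x ->
     occ_terms x (l1 ++ l2) /\ (forall y, occ y (th x) -> occ_terms y (l1 ++ l2))).

(* Basic atoms are [=] and [<>]; the basic atom [true] is the empty goal. *)
Inductive atom : Type :=
| Eq (t1 t2 : term)
| Neq (t1 t2 : term)
| Pred (p : nat) (args : list term).

Definition nonbasic (a : atom) : Prop :=
  match a with Pred _ _ => True | _ => False end.

Definition atom_terms (a : atom) : list term :=
  match a with
  | Eq t1 t2 => [t1; t2]
  | Neq t1 t2 => [t1; t2]
  | Pred _ args => args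
  end.

Definition subst_atom (s : subst) (a : atom) : atom :=
  match a with
  | Eq t1 t2 => Eq (app_subst s t1) (app_subst s t2)
  | Neq t1 t2 => Neq (app_subst s t1) (app_subst s t2)
  | Pred p args => Pred p (map (app_subst s) args)
  end.

(* A goal is a conjunction of atoms: a list, [","] is append, [true] is [nil]. *)
Definition goal := list atom.
Definition gtrue : goal := [].

Definition subst_goal (s : subst) (G : goal) : goal := map (subst_atom s) G.

Definition occ_atom (x : nat) (a : atom) : Prop := occ_terms x (atom_terms a).
Definition occ_goal (x : nat) (G : goal) : Prop := exists a, In a G /\ occ_atom x a.

(* A clause  p(args) <- body  (the head is non-basic by construction). *)
Record clause : Type := Clause { hd_pred : nat; hd_args : list term; bd : goal }.
Definition hd (C : clause) : atom := Pred (hd_pred C) (hd_args C).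

Definition occ_clause (x : nat) (C : clause) : Prop :=
  occ_atom x (hd C) \/ occ_goal x (bd C).

Definition program := list clause.

Definition rename_clause (rho : nat -> nat) (C : clause) : clause :=
  let s := fun x => Var (rho x) in
  Clause (hd_pred C) (map (app_subst s) (hd_args C)) (subst_goal s (bd C)).

Definition variant (C' C : clause) : Prop :=
  exists rho rho' : nat -> nat,
    (forall x, rho' (rho x) = x) /\ (forall x, rho (rho' x) = x) /\
    C' = rename_clause rho C.

Inductive step (P : program) : goal -> goal -> Prop :=
| step_eq t1 t2 G th :
    is_mgu th [t1] [t2] ->
    step P (Eq t1 t2 :: G) (subst_goal th G)
| step_neq t1 t2 G :
    ~ unifiable [t1] [t2] ->
    step P (Neq t1 t2 :: G) G
| step_res p args G C C' th :
    In C P ->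
    variant C' C ->
    (forall x, occ_clause x C' -> ~ occ_goal x (Pred p args :: G)) ->
    hd_pred C' = p ->
    is_mgu th args (hd_args C') ->
    step P (Pred p args :: G) (subst_goal th (bd C' ++ G)).

Definition steps (P : program) : goal -> goal -> Prop := clos_refl_trans _ (step P).

(* A derivation G0 |-> G1 |-> ... |-> Gz is represented by G0 and [G1;...;Gz]. *)
Fixpoint chain (P : program) (g : goal) (rest : list goal) : Prop :=
  match rest with
  | [] => True
  | g' :: r => step P g g' /\ chain P g' r
  end.

Definition successful_derivation (P : program) (G0 : goal) (rest : list goal) : Prop :=
  chain P G0 rest /\ last rest G0 = gtrue.

Definition starts_nonbasic (G : goal) : bool :=
  match G with Pred _ _ :: _ => true | _ => false end.

Definition lambda (G0 : goal) (rest : list goal) : nat :=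
  length (filter starts_nonbasic (G0 :: rest)).

(* minimum of a set of naturals; None encodes infinity (empty set) *)
Definition nat_min (S : nat -> Prop) : option nat :=
  epsilon (inhabits None)
    (fun o => match o with
              | None => ~ exists n, S n
              | Some m => S m /\ forall k, S k -> m <= k
              end).

Definition mu (P : program) (G : goal) : option nat :=
  nat_min (fun n => exists rest, successful_derivation P G rest /\ lambda G rest = n).

Definition nu (P : program) (G : goal) : option nat :=
  nat_min (fun n => exists rest, successful_derivation P G rest /\ length rest = n).

(* A mode assigns to a predicate symbol p an optional list of [m_i];
   [true] stands for '+', [false] for '?'. *)
Definition mode := nat -> option (list bool).

Definition satisfies_mode (M : mode) (a : atom) : Prop :=
  match a with
  | Pred p args =>
      exists ms, M p = Some ms /\ length ms = length args /\
        forall i t, nth_error args i = Some t -> nth_error ms i = Some true -> ground t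
  | _ => False
  end.

Definition input_var (M : mode) (a : atom) (x : nat) : Prop :=
  match a with
  | Pred p args =>
      exists ms i t, M p = Some ms /\ nth_error ms i = Some true /\
        nth_error args i = Some t /\ occ x t
  | _ => False
  end.

Definition mode_for (M : mode) (P : program) : Prop :=
  forall C, In C P -> forall a, (a = hd C \/ In a (bd C)) ->
    match a with
    | Pred p args => exists ms, M p = Some ms /\ length ms = length args
    | _ => True
    end.

Definition prog_satisfies (P : program) (M : mode) : Prop :=
  forall A0 A G, nonbasic A0 -> satisfies_mode M A0 ->
    nonbasic A -> steps P [A0] (A :: G) -> satisfies_mode M A.

(* X is a local variable of the subgoal G in the clause H <- G1, G, G2 *)
Definition local_var (x : nat) (H : atom) (G1 G G2 : goal) : Prop :=
  occ_goal x G /\ ~ (occ_atom x H \/ occ_goal x G1 \/ occ_goal x G2).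

Definition safe_clause (M : mode) (C : clause) : Prop :=
  forall G1 t1 t2 G2, bd C = G1 ++ Neq t1 t2 :: G2 ->
    forall x, occ_atom x (Neq t1 t2) ->
      input_var M (hd C) x \/ local_var x (hd C) G1 [Neq t1 t2] G2.

Definition safe (M : mode) (P : program) : Prop :=
  forall C, In C P -> safe_clause M C.

Definition diseqs (D : goal) : Prop :=
  forall a, In a D -> exists t1 t2, a = Neq t1 t2.

(* Relevant mgus bind only variables of the unified terms, and clause variants are renamed
   apart from the whole goal, so in a derivation of (G, Diseqs) the disequations are never
   instantiated: they are carried along and finally checked one step each. Conversely a
   derivation of G runs inside (G, Diseqs) once every clause variant is renamed away from
   vars(Diseqs). Thus both goals succeed exactly when G succeeds and no disequation of Diseqs
   is unifiable, with n + |Diseqs| steps and the same lambda. *)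

From Stdlib Require Import List Arith Lia Relations FinFun Classical ClassicalEpsilon
  FunctionalExtensionality PropExtensionality.
Import ListNotations.

Fixpoint term_nested_ind (Q : term -> Prop) (HV : forall x, Q (Var x))
  (HF : forall f args, Forall Q args -> Q (Fn f args)) (t : term) : Q t :=
  match t with
  | Var x => HV x
  | Fn f args =>
      HF f args ((fix go (l : list term) : Forall Q l :=
        match l with
        | [] => Forall_nil _
        | t :: l' => Forall_cons _ (term_nested_ind Q HV HF t) (go l')
        end) args)
  end.

Lemma occ_var_inv x y : occ x (Var y) -> x = y.
Proof. intro H; inversion H; reflexivity. Qed.

Lemma occ_fn_inv x f args : occ x (Fn f args) -> occ_terms x args.
Proof. intro H; inversion H; subst; eexists; eauto. Qed.

Lemma app_subst_ext s s' t :
  (forall x, occ x t -> s x = s' x) -> app_subst s t = app_subst s' t.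
Proof.
  induction t as [x|f args IH] using term_nested_ind; intro H; simpl.
  - apply H; constructor.
  - f_equal; apply map_ext_in; intros a Ha.
    apply (proj1 (Forall_forall _ _) IH a Ha).
    intros x Hx; apply H; econstructor; eauto.
Qed.

Lemma app_subst_comp s s' t :
  app_subst s (app_subst s' t) = app_subst (fun x => app_subst s (s' x)) t.
Proof.
  induction t as [x|f args IH] using term_nested_ind; simpl; [reflexivity|].
  f_equal; rewrite map_map; apply map_ext_in; intros a Ha.
  exact (proj1 (Forall_forall _ _) IH a Ha).
Qed.

Lemma app_subst_var t : app_subst Var t = t.
Proof.
  induction t as [x|f args IH] using term_nested_ind; simpl; [reflexivity|].
  f_equal; rewrite <- (map_id args) at 2; apply map_ext_in.
  exact (proj1 (Forall_forall _ _) IH).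
Qed.

Lemma occ_app_subst s y t :
  occ y (app_subst s t) <-> exists z, occ z t /\ occ y (s z).
Proof.
  induction t as [x|f args IH] using term_nested_ind; simpl.
  - split; [intro H; exists x; split; [constructor|exact H]|].
    intros (z & Hz & Hy); apply occ_var_inv in Hz; subst; exact Hy.
  - rewrite Forall_forall in IH; split.
    + intro H; apply occ_fn_inv in H as (t' & Hin & Ho).
      apply in_map_iff in Hin as (a & <- & Ha).
      apply (IH a Ha) in Ho as (z & Hz & Hy).
      exists z; split; [econstructor|]; eauto.
    + intros (z & Hz & Hy); apply occ_fn_inv in Hz as (a & Ha & Hza).
      econstructor; [apply in_map, Ha|]; apply (IH a Ha); eauto.
Qed.

Lemma occ_terms_map s y l :
  occ_terms y (map (app_subst s) l) <-> exists z, occ_terms z l /\ occ y (s z).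
Proof.
  split.
  - intros (t & Hin & Ho); apply in_map_iff in Hin as (a & <- & Ha).
    apply occ_app_subst in Ho as (z & Hz & Hy); exists z; split; [exists a|]; auto.
  - intros (z & (a & Ha & Hz) & Hy); exists (app_subst s a); split.
    + apply in_map, Ha.
    + apply occ_app_subst; eauto.
Qed.

Lemma occ_terms_app x l1 l2 : occ_terms x (l1 ++ l2) <-> occ_terms x l1 \/ occ_terms x l2.
Proof.
  split.
  - intros (t & Hin & Ho); apply in_app_or in Hin as [Hin|Hin]; [left|right]; exists t; auto.
  - intros [(t & Hin & Ho)|(t & Hin & Ho)]; exists t; split; auto; apply in_or_app; auto.
Qed.

Lemma occ_goal_app x g1 g2 : occ_goal x (g1 ++ g2) <-> occ_goal x g1 \/ occ_goal x g2.
Proof.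
  split.
  - intros (a & Hin & Ho); apply in_app_or in Hin as [Hin|Hin]; [left|right]; exists a; auto.
  - intros [(a & Hin & Ho)|(a & Hin & Ho)]; exists a; split; auto; apply in_or_app; auto.
Qed.

Lemma occ_goal_cons x a g : occ_goal x (a :: g) <-> occ_atom x a \/ occ_goal x g.
Proof.
  split.
  - intros (b & [<-|Hin] & Ho); [left; exact Ho | right; exists b; auto].
  - intros [H|(b & Hin & Ho)]; [exists a | exists b]; simpl; auto.
Qed.

Lemma atom_terms_subst s a : atom_terms (subst_atom s a) = map (app_subst s) (atom_terms a).
Proof. destruct a; reflexivity. Qed.

Lemma occ_goal_subst s y g :
  occ_goal y (subst_goal s g) <-> exists z, occ_goal z g /\ occ y (s z).
Proof.
  split.
  - intros (b & Hin & Ho); apply in_map_iff in Hin as (a & <- & Ha).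
    unfold occ_atom in Ho; rewrite atom_terms_subst, occ_terms_map in Ho.
    destruct Ho as (z & Hz & Hy); exists z; split; [exists a|]; auto.
  - intros (z & (a & Ha & Hz) & Hy); exists (subst_atom s a); split.
    + apply in_map, Ha.
    + unfold occ_atom; rewrite atom_terms_subst, occ_terms_map; eauto.
Qed.

Lemma subst_atom_ext s s' a :
  (forall x, occ_atom x a -> s x = s' x) -> subst_atom s a = subst_atom s' a.
Proof.
  intro H.
  assert (Ht : forall t, In t (atom_terms a) -> app_subst s t = app_subst s' t)
    by (intros t Ht; apply app_subst_ext; intros x Hx; apply H; exists t; auto).
  destruct a; simpl in *; f_equal; auto; apply map_ext_in; auto.
Qed.

Lemma subst_goal_ext s s' g :
  (forall x, occ_goal x g -> s x = s' x) -> subst_goal s g = subst_goal s' g.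
Proof.
  intro H; apply map_ext_in; intros a Ha.
  apply subst_atom_ext; intros x Hx; apply H; exists a; auto.
Qed.

Lemma subst_goal_comp s s' g :
  subst_goal s (subst_goal s' g) = subst_goal (fun x => app_subst s (s' x)) g.
Proof.
  unfold subst_goal; rewrite map_map; apply map_ext; intros []; simpl;
    rewrite ?map_map; f_equal; auto using app_subst_comp, map_ext.
Qed.

Lemma subst_goal_app s g1 g2 :
  subst_goal s (g1 ++ g2) = subst_goal s g1 ++ subst_goal s g2.
Proof. apply map_app. Qed.

Lemma subst_goal_var s g : (forall x, occ_goal x g -> s x = Var x) -> subst_goal s g = g.
Proof.
  intro H; rewrite (subst_goal_ext s Var g H).
  unfold subst_goal; rewrite <- (map_id g) at 2; apply map_ext; intros []; simpl;
    rewrite ?app_subst_var; f_equal.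
  rewrite <- (map_id args) at 2; apply map_ext, app_subst_var.
Qed.
Definition bounded (V : nat -> Prop) : Prop := exists N, forall x, V x -> x < N.

Lemma bounded_or V W : bounded V -> bounded W -> bounded (fun x => V x \/ W x).
Proof.
  intros [N HN] [K HK]; exists (N + K); intros x [Hx|Hx];
    [specialize (HN x Hx) | specialize (HK x Hx)]; lia.
Qed.

Lemma bounded_list {A} (R : nat -> A -> Prop) l :
  (forall a, In a l -> bounded (fun x => R x a)) ->
  bounded (fun x => exists a, In a l /\ R x a).
Proof.
  induction l as [|a l IH]; intro Hl.
  - exists 0; intros x (b & [] & _).
  - destruct (bounded_or _ _ (Hl a (or_introl eq_refl))
                (IH (fun b Hb => Hl b (or_intror Hb)))) as [N HN].
    exists N; intros x (b & [<-|Hb] & Hx); apply HN; eauto.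
Qed.

Lemma term_bounded t : bounded (fun x => occ x t).
Proof.
  induction t as [y|f args IH] using term_nested_ind.
  - exists (S y); intros x Hx; apply occ_var_inv in Hx; lia.
  - rewrite Forall_forall in IH.
    destruct (bounded_list occ args IH) as [N HN].
    exists N; intros x Hx; exact (HN x (occ_fn_inv _ _ _ Hx)).
Qed.

Lemma terms_bounded l : bounded (fun x => occ_terms x l).
Proof. apply (bounded_list occ); intros t _; apply term_bounded. Qed.

Lemma goal_bounded g : bounded (fun x => occ_goal x g).
Proof. apply (bounded_list (fun x a => occ_atom x a)); intros a _; apply terms_bounded. Qed.

Lemma clause_bounded C : bounded (fun x => occ_clause x C).
Proof. apply bounded_or; [apply terms_bounded | apply goal_bounded]. Qed.

Definition swap_out (N : nat) (Q : nat -> Prop) (x : nat) : nat :=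
  if excluded_middle_informative (x < N /\ Q x) then x + N
  else if excluded_middle_informative (N <= x /\ Q (x - N)) then x - N
  else x.

Lemma swap_out_involutive N Q x :
  (forall y, Q y -> y < N) -> swap_out N Q (swap_out N Q x) = x.
Proof.
  intro HQ; unfold swap_out.
  destruct (excluded_middle_informative (x < N /\ Q x)) as [[Hx Qx]|Hx].
  - destruct (excluded_middle_informative (x + N < N /\ Q (x + N))) as [[? _]|_]; [lia|].
    replace (x + N - N) with x by lia.
    destruct (excluded_middle_informative (N <= x + N /\ Q x)) as [_|H]; [lia|].
    exfalso; apply H; split; [lia | exact Qx].
  - destruct (excluded_middle_informative (N <= x /\ Q (x - N))) as [[Hx' Qx]|Hx'].
    + destruct (excluded_middle_informative (x - N < N /\ Q (x - N))) as [_|H]; [lia|].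
      exfalso; apply H; split; [apply HQ, Qx | exact Qx].
    + destruct (excluded_middle_informative (x < N /\ Q x)); [tauto|].
      destruct (excluded_middle_informative (N <= x /\ Q (x - N))); tauto.
Qed.

Lemma renaming_apart (K V Q : nat -> Prop) :
  bounded K -> bounded V -> bounded Q -> (forall x, K x -> ~ Q x) ->
  exists pi, Bijective pi /\ (forall x, K x -> pi x = x) /\ (forall x, V x -> ~ Q (pi x)).
Proof.
  intros [NK HK] [NV HV] [NQ HQ] HKQ.
  set (N := NK + NV + NQ).
  assert (HQN : forall x, Q x -> x < N) by (intros x Hx; specialize (HQ x Hx); lia).
  exists (swap_out N Q); repeat split.
  - exists (swap_out N Q); split; intro; apply swap_out_involutive, HQN.
  - intros x Kx; specialize (HK x Kx); unfold swap_out.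
    destruct (excluded_middle_informative (x < N /\ Q x)) as [[_ Qx]|_];
      [exfalso; exact (HKQ x Kx Qx)|].
    destruct (excluded_middle_informative (N <= x /\ Q (x - N))) as [[? _]|_]; [lia|reflexivity].
  - intros x Vx; specialize (HV x Vx); unfold swap_out.
    destruct (excluded_middle_informative (x < N /\ Q x)) as [_|Hx];
      [intro Qx; specialize (HQN _ Qx); lia|].
    destruct (excluded_middle_informative (N <= x /\ Q (x - N))) as [[? _]|_]; [lia|].
    intro Qx; apply Hx; split; [lia | exact Qx].
Qed.

Definition disjoint (g D : goal) : Prop := forall x, occ_goal x g -> ~ occ_goal x D.

Lemma mgu_occ th l1 l2 x y :
  is_mgu th l1 l2 -> occ y (th x) -> y = x \/ occ_terms y (l1 ++ l2).
Proof.
  intros (_ & _ & _ & Hrel) Hy.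
  destruct (classic (th x = Var x)) as [E|E].
  - rewrite E in Hy; left; exact (occ_var_inv _ _ Hy).
  - right; exact (proj2 (Hrel x E) y Hy).
Qed.

Lemma mgu_frame th l1 l2 g D :
  is_mgu th l1 l2 -> (forall x, occ_terms x (l1 ++ l2) -> ~ occ_goal x D) ->
  disjoint g D ->
  subst_goal th (g ++ D) = subst_goal th g ++ D /\ disjoint (subst_goal th g) D.
Proof.
  intros Hth Hl HgD; split.
  - rewrite subst_goal_app; f_equal.
    apply subst_goal_var; intros x Hx.
    destruct (classic (th x = Var x)) as [E|E]; [exact E|].
    exfalso; destruct Hth as (_ & _ & _ & Hrel).
    exact (Hl x (proj1 (Hrel x E)) Hx).
  - intros y Hy; apply occ_goal_subst in Hy as (z & Hz & Hy).
    destruct (mgu_occ _ _ _ _ _ Hth Hy) as [->|Hy']; [exact (HgD z Hz) | exact (Hl y Hy')].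
Qed.

Lemma resolvent_frame th p args C' G D :
  is_mgu th args (hd_args C') -> disjoint (Pred p args :: G) D ->
  (forall x, occ_clause x C' -> ~ occ_goal x D) ->
  subst_goal th (bd C' ++ G ++ D) = subst_goal th (bd C' ++ G) ++ D /\
  disjoint (subst_goal th (bd C' ++ G)) D.
Proof.
  intros Hm HGD HC; rewrite app_assoc; apply (mgu_frame th args (hd_args C')); [exact Hm | |].
  - intros x Hx; apply occ_terms_app in Hx as [Hx|Hx].
    + apply HGD, occ_goal_cons; left; exact Hx.
    + apply HC; left; exact Hx.
  - intros x Hx; apply occ_goal_app in Hx as [Hx|Hx].
    + apply HC; right; exact Hx.
    + apply HGD, occ_goal_cons; right; exact Hx.
Qed.

Definition ren (pi : nat -> nat) : subst := fun x => Var (pi x).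

Lemma occ_ren pi y t : occ y (app_subst (ren pi) t) <-> exists z, occ z t /\ y = pi z.
Proof.
  rewrite occ_app_subst; split; intros (z & Hz & Hy); exists z; split; auto.
  - exact (occ_var_inv _ _ Hy).
  - subst; constructor.
Qed.

Lemma occ_terms_ren pi y l :
  occ_terms y (map (app_subst (ren pi)) l) <-> exists z, occ_terms z l /\ y = pi z.
Proof.
  rewrite occ_terms_map; split; intros (z & Hz & Hy); exists z; split; auto.
  - exact (occ_var_inv _ _ Hy).
  - subst; constructor.
Qed.

Lemma occ_goal_ren pi y g :
  occ_goal y (subst_goal (ren pi) g) <-> exists z, occ_goal z g /\ y = pi z.
Proof.
  rewrite occ_goal_subst; split; intros (z & Hz & Hy); exists z; split; auto.
  - exact (occ_var_inv _ _ Hy).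
  - subst; constructor.
Qed.

Lemma unifier_ren s pi l1 l2 :
  unifier s (map (app_subst (ren pi)) l1) (map (app_subst (ren pi)) l2) <->
  unifier (fun x => s (pi x)) l1 l2.
Proof.
  unfold unifier; rewrite !map_map.
  rewrite !(map_ext (fun t => app_subst s (app_subst (ren pi) t)) (app_subst (fun x => s (pi x))))
    by (intro; apply app_subst_comp).
  reflexivity.
Qed.

Section Conjugation.

Variables (th th' : subst) (pi : nat -> nat).
Hypothesis conj_th : forall x, th' (pi x) = app_subst (ren pi) (th x).

Lemma app_subst_ren_conj t :
  app_subst th' (app_subst (ren pi) t) = app_subst (ren pi) (app_subst th t).
Proof. rewrite !app_subst_comp; apply app_subst_ext; intros x _; apply conj_th. Qed.

Lemma subst_goal_ren_conj g :
  subst_goal th' (subst_goal (ren pi) g) = subst_goal (ren pi) (subst_goal th g).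
Proof. rewrite !subst_goal_comp; apply subst_goal_ext; intros x _; apply conj_th. Qed.

End Conjugation.

Lemma mgu_ren th l1 l2 pi : Bijective pi -> is_mgu th l1 l2 ->
  exists th', (forall x, th' (pi x) = app_subst (ren pi) (th x)) /\
    is_mgu th' (map (app_subst (ren pi)) l1) (map (app_subst (ren pi)) l2).
Proof.
  intros (pi' & Hpi'pi & Hpipi') (Hu & Hmg & Hidem & Hrel).
  set (th' := fun x => app_subst (ren pi) (th (pi' x))).
  assert (Hconj : forall x, th' (pi x) = app_subst (ren pi) (th x))
    by (intro x; unfold th'; rewrite Hpi'pi; reflexivity).
  exists th'; split; [exact Hconj|]; split; [|split; [|split]].
  - unfold unifier; rewrite !map_map.
    rewrite !(map_ext _ _ (app_subst_ren_conj th th' pi Hconj)), <- !(map_map (app_subst th)).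
    f_equal; exact Hu.
  - intros s Hs; apply unifier_ren, Hmg in Hs as [eta Heta].
    exists (fun y => eta (pi' y)); intro x.
    unfold th'; rewrite app_subst_comp; simpl.
    rewrite (app_subst_ext _ eta) by (intros; rewrite Hpi'pi; reflexivity).
    rewrite <- Heta, Hpipi'; reflexivity.
  - intro x; unfold th' at 2.
    rewrite (app_subst_ren_conj th th' pi Hconj), Hidem; reflexivity.
  - intros x Hx; rewrite <- map_app.
    assert (Hne : th (pi' x) <> Var (pi' x))
      by (intro E; apply Hx; unfold th'; rewrite E; simpl; unfold ren; rewrite Hpipi'; reflexivity).
    destruct (Hrel _ Hne) as [Ho Hy]; split.
    + apply occ_terms_ren; exists (pi' x); split; [exact Ho | symmetry; apply Hpipi'].
    + intros y Hyo; apply occ_ren in Hyo as (z & Hz & ->).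
      apply occ_terms_ren; exists z; split; [exact (Hy z Hz) | reflexivity].
Qed.

Lemma variant_ren C' C pi : Bijective pi -> variant C' C -> variant (rename_clause pi C') C.
Proof.
  intros (pi' & H1 & H2) (rho & rho' & R1 & R2 & ->).
  exists (fun x => pi (rho x)), (fun x => rho' (pi' x)); repeat split.
  - intro x; rewrite H1, R1; reflexivity.
  - intro x; rewrite R2, H2; reflexivity.
  - unfold rename_clause; simpl; f_equal.
    + rewrite map_map; apply map_ext; intro; apply app_subst_comp.
    + apply subst_goal_comp.
Qed.

Lemma occ_clause_ren x pi C :
  occ_clause x (rename_clause pi C) <-> exists z, occ_clause z C /\ x = pi z.
Proof.
  unfold occ_clause, occ_atom; simpl; split.
  - intros [H|H]; [apply occ_terms_ren in H | apply occ_goal_ren in H];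
      destruct H as (z & Hz & ->); eauto.
  - intros (z & [Hz|Hz] & ->); [left; apply occ_terms_ren | right; apply occ_goal_ren]; eauto.
Qed.

Lemma step_ren P g g' pi : Bijective pi -> step P g g' ->
  step P (subst_goal (ren pi) g) (subst_goal (ren pi) g').
Proof.
  intros Hpi Hs; pose proof Hpi as (pi' & Hpi'pi & _).
  destruct Hs as [t1 t2 G th Hm | t1 t2 G Hnu | p args G C C' th Hin Hv Hap Hp Hm].
  - destruct (mgu_ren th [t1] [t2] pi Hpi Hm) as (th' & Hconj & Hm').
    rewrite <- (subst_goal_ren_conj th th' pi Hconj); apply step_eq, Hm'.
  - apply step_neq; intros [s Hs]; apply Hnu; exists (fun x => s (pi x)).
    apply (unifier_ren s pi [t1] [t2]), Hs.
  - destruct (mgu_ren th args (hd_args C') pi Hpi Hm) as (th' & Hconj & Hm').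
    rewrite <- (subst_goal_ren_conj th th' pi Hconj).
    rewrite subst_goal_app.
    eapply step_res with (C := C) (C' := rename_clause pi C'); eauto.
    + apply variant_ren; assumption.
    + intros x Hx Hg; apply occ_clause_ren in Hx as (z & Hz & ->).
      apply (occ_goal_ren pi _ (Pred p args :: G)) in Hg as (z' & Hz' & E).
      apply (f_equal pi') in E; rewrite !Hpi'pi in E; subst z'.
      exact (Hap z Hz Hz').
Qed.

Inductive succeeds (P : program) : goal -> nat -> nat -> Prop :=
| succeeds_true : succeeds P gtrue 0 0
| succeeds_step g g' n l : step P g g' -> succeeds P g' n l ->
    succeeds P g (S n) (Nat.b2n (starts_nonbasic g) + l).

Lemma step_gtrue P g : ~ step P gtrue g.
Proof. intro H; inversion H. Qed.

Lemma succeeds_ren P g n l pi : Bijective pi -> succeeds P g n l ->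
  succeeds P (subst_goal (ren pi) g) n l.
Proof.
  intros Hpi Hs; induction Hs as [|g g' n l Hst Hs IH]; [constructor|].
  replace (starts_nonbasic g) with (starts_nonbasic (subst_goal (ren pi) g))
    by (destruct g as [|[] g]; reflexivity).
  apply succeeds_step with (subst_goal (ren pi) g'); [apply step_ren|]; assumption.
Qed.

Lemma last_cons {A} (a : A) l d : last (a :: l) d = last l a.
Proof.
  revert a d; induction l as [|b l IH]; intros a d; [reflexivity|].
  change (last (a :: b :: l) d) with (last (b :: l) d); rewrite !IH; reflexivity.
Qed.

Lemma succeeds_iff_derivation P g n l : succeeds P g n l <->
  exists rest, successful_derivation P g rest /\ lambda g rest = l /\ length rest = n.
Proof.
  split.
  - intro Hs; induction Hs as [|g g' n l Hst Hs (rest & (Hc & Hl) & Hla & Hle)].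
    + exists []; repeat split.
    + exists (g' :: rest); split; [split; [split; assumption | rewrite last_cons; exact Hl]|].
      split; [|simpl; congruence].
      unfold lambda in *; rewrite <- Hla; simpl; destruct (starts_nonbasic g); reflexivity.
  - intros (rest & (Hc & Hl) & <- & <-); revert g Hc Hl.
    induction rest as [|g' rest IH]; intros g Hc Hl.
    + simpl in Hl; subst; constructor.
    + destruct Hc as [Hst Hc]; rewrite last_cons in Hl.
      replace (lambda g (g' :: rest)) with (Nat.b2n (starts_nonbasic g) + lambda g' rest)
        by (unfold lambda; simpl; destruct (starts_nonbasic g); reflexivity).
      apply succeeds_step with g'; auto.
Qed.

Lemma steps_iff_succeeds P g : steps P g gtrue <-> exists n l, succeeds P g n l.
Proof.
  split.
  - intro H; apply clos_rt_rt1n in H.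
    remember gtrue as e eqn:Ee; induction H as [|g g' e Hst _ IH]; subst.
    + exists 0, 0; constructor.
    + destruct IH as (n & l & Hs); [reflexivity|]; eexists; eexists; econstructor; eauto.
  - intros (n & l & Hs); induction Hs as [|g g' n l Hst _ IH]; [apply rt_refl|].
    apply rt_trans with g'; [apply rt_step|]; assumption.
Qed.

Lemma nat_min_ext (S1 S2 : nat -> Prop) :
  (forall n, S1 n <-> S2 n) -> nat_min S1 = nat_min S2.
Proof.
  intro H; f_equal; apply functional_extensionality; intro n.
  apply propositional_extensionality, H.
Qed.

Lemma mu_succeeds P g : mu P g = nat_min (fun l => exists n, succeeds P g n l).
Proof.
  apply nat_min_ext; intro l; split.
  - intros (rest & Hd & Hl); exists (length rest); apply succeeds_iff_derivation; eauto.
  - intros [n Hs]; apply succeeds_iff_derivation in Hs as (rest & Hd & Hl & _); eauto.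
Qed.

Lemma nu_succeeds P g : nu P g = nat_min (fun n => exists l, succeeds P g n l).
Proof.
  apply nat_min_ext; intro n; split.
  - intros (rest & Hd & Hn); exists (lambda g rest); apply succeeds_iff_derivation; eauto.
  - intros [l Hs]; apply succeeds_iff_derivation in Hs as (rest & Hd & _ & Hn); eauto.
Qed.

Definition nonunifiable_diseqs (D : goal) : Prop :=
  forall t1 t2, In (Neq t1 t2) D -> ~ unifiable [t1] [t2].

Lemma succeeds_diseqs_app P D G n l : diseqs D ->
  succeeds P (D ++ G) n l <->
  exists n1, n = length D + n1 /\ succeeds P G n1 l /\ nonunifiable_diseqs D.
Proof.
  revert n; induction D as [|a D IH]; intros n HD.
  - split; [|intros (n1 & -> & Hs & _); exact Hs].
    intro Hs; exists n; repeat split; [exact Hs | intros ? ? []].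
  - destruct (HD a (or_introl eq_refl)) as (t1 & t2 & ->).
    assert (HD' : diseqs D) by (intros b Hb; apply HD; right; exact Hb).
    split.
    + intro Hs; inversion Hs as [|? g' n' l' Hst Hs']; subst.
      inversion Hst; subst.
      apply IH in Hs' as (n1 & -> & HG & Hnu); [|exact HD'].
      exists n1; repeat split; [exact HG|].
      intros u1 u2 [E|Hin]; [injection E as -> ->; assumption | exact (Hnu _ _ Hin)].
    + intros (n1 & -> & HG & Hnu).
      change l with (Nat.b2n (starts_nonbasic (Neq t1 t2 :: D ++ G)) + l).
      apply succeeds_step with (D ++ G).
      * apply step_neq, Hnu; left; reflexivity.
      * apply IH; [exact HD'|]; exists n1; repeat split; [exact HG|].
        intros u1 u2 Hin; apply Hnu; right; exact Hin.
Qed.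

Lemma succeeds_diseqs P D n l : diseqs D ->
  succeeds P D n l <-> n = length D /\ l = 0 /\ nonunifiable_diseqs D.
Proof.
  intro HD; rewrite <- (app_nil_r D) at 1; rewrite succeeds_diseqs_app by exact HD; split.
  - intros (n1 & -> & Hs & Hnu); inversion Hs as [|? g' ? ? Hst]; subst;
      [repeat split; auto | destruct (step_gtrue _ _ Hst)].
  - intros (-> & -> & Hnu); exists 0; repeat split; auto; constructor.
Qed.

Lemma step_app_disjoint_inv P H D g : step P (H ++ D) g -> H <> [] -> disjoint H D ->
  exists g', g = g' ++ D /\ step P H g' /\ disjoint g' D.
Proof.
  intros Hs HH HHD; destruct H as [|a H]; [contradiction|].
  simpl in Hs; remember (a :: H ++ D) as g0 eqn:E; revert E.
  destruct Hs as [t1 t2 G th Hm | t1 t2 G Hnu | p args G C C' th Hin Hv Hap Hp Hm];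
    intro E; injection E as <- ->.
  - destruct (mgu_frame th [t1] [t2] H D Hm) as [-> HgD].
    + intros x Hx; apply HHD, occ_goal_cons; left; exact Hx.
    + intros x Hx; apply HHD, occ_goal_cons; right; exact Hx.
    + eexists; split; [reflexivity|]; split; [apply step_eq, Hm | exact HgD].
  - exists H; split; [reflexivity|]; split; [apply step_neq, Hnu|].
    intros x Hx; apply HHD, occ_goal_cons; right; exact Hx.
  - assert (HC : forall x, occ_clause x C' -> ~ occ_goal x D).
    { intros x Hx HxD; apply (Hap x Hx), occ_goal_cons; right.
      apply occ_goal_app; right; exact HxD. }
    destruct (resolvent_frame th p args C' H D Hm HHD HC) as [-> HgD].
    eexists; split; [reflexivity|]; split; [|exact HgD].
    eapply step_res; eauto.
    intros x Hx HxH; apply (Hap x Hx).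
    apply occ_goal_cons in HxH as [HxH|HxH]; apply occ_goal_cons; [left | right]; auto.
    apply occ_goal_app; left; exact HxH.
Qed.

(* A clause variant used in a step of [H] alone may share variables with [D]. *)
Lemma rename_clause_apart H D C' : disjoint H D ->
  (forall x, occ_clause x C' -> ~ occ_goal x H) ->
  exists pi, Bijective pi /\ subst_goal (ren pi) H = H /\
    forall x, occ_clause x (rename_clause pi C') -> ~ occ_goal x (H ++ D).
Proof.
  intros HHD Hap.
  destruct (renaming_apart (fun x => occ_goal x H) (fun x => occ_clause x C')
              (fun x => occ_goal x D)) as (pi & Hpi & Hfix & Hapart);
    [apply goal_bounded | apply clause_bounded | apply goal_bounded | exact HHD |].
  exists pi; split; [exact Hpi|]; split.
  - apply subst_goal_var; intros x Hx; unfold ren; rewrite Hfix by exact Hx; reflexivity.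
  - intros x Hx HxG; apply occ_clause_ren in Hx as (z & Hz & ->).
    apply occ_goal_app in HxG as [HxG|HxG]; [|exact (Hapart z Hz HxG)].
    destruct Hpi as (pi' & Hpi'pi & _).
    assert (Ez : pi z = z)
      by (rewrite <- (Hpi'pi (pi z)), Hfix, Hpi'pi by exact HxG; reflexivity).
    rewrite Ez in HxG; exact (Hap z Hz HxG).
Qed.

Lemma step_app_disjoint P H D g' : step P H g' -> disjoint H D ->
  exists pi, Bijective pi /\ step P (H ++ D) (subst_goal (ren pi) g' ++ D) /\
    disjoint (subst_goal (ren pi) g') D.
Proof.
  intros Hs HHD.
  assert (Hid : Bijective (fun x : nat => x)) by (exists (fun x => x); split; reflexivity).
  assert (Hren_id : forall g, subst_goal (ren (fun x => x)) g = g)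
    by (intro; apply subst_goal_var; reflexivity).
  destruct Hs as [t1 t2 G th Hm | t1 t2 G Hnu | p args G C C' th Hin Hv Hap Hp Hm].
  - exists (fun x => x); rewrite Hren_id; split; [exact Hid|].
    destruct (mgu_frame th [t1] [t2] G D Hm) as [E HgD].
    + intros x Hx; apply HHD, occ_goal_cons; left; exact Hx.
    + intros x Hx; apply HHD, occ_goal_cons; right; exact Hx.
    + rewrite <- E; split; [apply step_eq, Hm | exact HgD].
  - exists (fun x => x); rewrite Hren_id; split; [exact Hid|].
    split; [apply step_neq, Hnu|].
    intros x Hx; apply HHD, occ_goal_cons; right; exact Hx.
  - destruct (rename_clause_apart _ D C' HHD Hap) as (pi & Hpi & HH & Happ).
    injection HH as Hargs HG.
    destruct (mgu_ren th args (hd_args C') pi Hpi Hm) as (th' & Hconj & Hm').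
    rewrite Hargs in Hm'.
    assert (HC : forall x, occ_clause x (rename_clause pi C') -> ~ occ_goal x D)
      by (intros x Hx HxD; apply (Happ x Hx), occ_goal_app; right; exact HxD).
    exists pi; split; [exact Hpi|].
    rewrite <- (subst_goal_ren_conj th th' pi Hconj), subst_goal_app, HG.
    change (subst_goal (ren pi) (bd C')) with (bd (rename_clause pi C')).
    destruct (resolvent_frame th' p args (rename_clause pi C') G D Hm' HHD HC) as [<- HgD].
    split; [|exact HgD].
    eapply step_res; eauto; apply variant_ren; assumption.
Qed.

Lemma succeeds_app_disjoint_inv P G D n l : diseqs D -> disjoint G D ->
  succeeds P (G ++ D) n l ->
  exists n1, n = n1 + length D /\ succeeds P G n1 l /\ nonunifiable_diseqs D.
Proof.
  intros HD HGD Hs; remember (G ++ D) as g eqn:E; revert G E HGD.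
  induction Hs as [|g g' n l Hst Hs IH]; intros G E HGD.
  - symmetry in E; apply app_eq_nil in E as [-> ->].
    exists 0; repeat split; [constructor | intros ? ? []].
  - destruct G as [|a G'].
    + simpl in E; subst g.
      assert (HDs : succeeds P D (S n) (Nat.b2n (starts_nonbasic D) + l))
        by (econstructor; eassumption).
      apply succeeds_diseqs in HDs as (-> & -> & Hnu); [|exact HD].
      exists 0; repeat split; [constructor | exact Hnu].
    + subst g; destruct (step_app_disjoint_inv P (a :: G') D g' Hst) as (g'' & -> & Hst' & HgD);
        [discriminate | exact HGD |].
      destruct (IH g'' eq_refl HgD) as (n1 & -> & Hs' & Hnu).
      exists (S n1); repeat split; [|exact Hnu].
      change (starts_nonbasic ((a :: G') ++ D)) with (starts_nonbasic (a :: G')).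
      apply succeeds_step with g''; assumption.
Qed.

Lemma succeeds_app_disjoint P G D n l : diseqs D -> nonunifiable_diseqs D ->
  succeeds P G n l -> disjoint G D -> succeeds P (G ++ D) (n + length D) l.
Proof.
  intros HD Hnu; revert G l; induction n as [|n IH]; intros G l Hs HGD;
    inversion Hs as [|? g' ? l' Hst Hs']; subst.
  - apply succeeds_diseqs; auto.
  - destruct (step_app_disjoint P G D g' Hst HGD) as (pi & Hpi & Hst' & HgD).
    replace (starts_nonbasic G) with (starts_nonbasic (G ++ D))
      by (destruct G; [destruct (step_gtrue _ _ Hst) | reflexivity]).
    apply succeeds_step with (subst_goal (ren pi) g' ++ D); [exact Hst'|].
    apply IH; [apply succeeds_ren|]; assumption.
Qed.

Theorem lemma9 (P : program) (M : mode) (Diseqs G : goal) :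
  mode_for M P -> safe M P -> prog_satisfies P M ->
  diseqs Diseqs ->
  (forall x, occ_goal x Diseqs -> ~ occ_goal x G) ->
  (steps P (G ++ Diseqs) gtrue <-> steps P (Diseqs ++ G) gtrue) /\
  mu P (G ++ Diseqs) = mu P (Diseqs ++ G) /\
  nu P (G ++ Diseqs) = nu P (Diseqs ++ G).
Proof.
  intros _ _ _ HD HDG.
  assert (HGD : disjoint G Diseqs) by (intros x HG HD'; exact (HDG x HD' HG)).
  assert (Hswap : forall n l, succeeds P (G ++ Diseqs) n l <-> succeeds P (Diseqs ++ G) n l).
  { intros n l; rewrite (succeeds_diseqs_app P Diseqs G) by exact HD; split.
    - intros Hs; apply succeeds_app_disjoint_inv in Hs as (n1 & -> & Hs & Hnu); auto.
      exists n1; rewrite Nat.add_comm; auto.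
    - intros (n1 & -> & Hs & Hnu); rewrite Nat.add_comm.
      apply succeeds_app_disjoint; assumption. }
  rewrite !steps_iff_succeeds, !mu_succeeds, !nu_succeeds.
  split; [|split; apply nat_min_ext].
  - split; intros (n & l & Hs); exists n, l; apply Hswap, Hs.
  - intro l; split; intros [n Hs]; exists n; apply Hswap, Hs.
  - intro n; split; intros [l Hs]; exists l; apply Hswap, Hs.
Qed.
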